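(* Let $\sigma,\tau$ be $d$-dimensional signatures on a connected graph $G$ with $\sigma\cong\tau$ via a switching map $f:V\to\mathsf{O}(d)$. Then for any distinct $i,j\in V$, $$F_{ij}\,\mathcal{C}^\sigma(i,j)=\mathcal{C}^\tau(i,j)\,F_{ij},\qquad F_{ij}=\begin{bmatrix}f(i)&0_{d\times d}\\0_{d\times d}&f(j)\end{bmatrix}.$$
   Context: $G=(V,E,W)$ is a finite connected weighted graph, $w_{xy}>0$ iff $\{x,y\}\in E$, $\deg(x)=\sum_y w_{xy}$. A $d$-dimensional signature maps oriented edges to $\mathsf{O}(d)$ with $\sigma_{yx}=\sigma_{xy}^{\mathrm T}$. $\sigma\cong\tau$ via $f$ means $f(x)\sigma_{xy}=\tau_{xy}f(y)$ for every oriented edge $(x,y)$. The connection Laplacian $\mathcal{L}^\sigma$ is the $nd\times nd$ block matrix with blocks $\deg(x)I_d$ on the diagonal, $-w_{xy}\sigma_{xy}$ for $x\sim y$, $0$ otherwise. For $M=\begin{bmatrix}A&B\\C&D\end{bmatrix}$, $M/D=A-BD^\dagger C$. The conductance matrix is $\mathcal{C}^\sigma(i,j)=\mathcal{L}^\sigma/\mathcal{L}^\sigma_{\{i,j\}^c,\{i,j\}^c}\in\mathbb{R}^{2d\times2d}$, blocks ordered $i$ then $j$. *)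

From HB Require Import structures.
From mathcomp Require Import all_boot all_order all_algebra.
From Stdlib Require Import ClassicalEpsilon.
Set Implicit Arguments.
Unset Strict Implicit.
Unset Printing Implicit Defensive.
Import Order.TTheory GRing.Theory Num.Theory.
Local Open Scope ring_scope.

(* Vertices of the graph are 'I_n.  Index (x, a) of the nd x nd block matrix
   (vertex x, coordinate a < d) is the flat index mxvec_index x a : 'I_(n*d);
   this is the block (vertex-major) ordering. *)
Definition unvec (m k : nat) (p : 'I_(m * k)) : 'I_m * 'I_k :=
  enum_val (cast_ord (esym (@mxvec_cast m k)) p).

Definition orthomx (R : realFieldType) (d : nat) (A : 'M[R]_d) : bool :=
  A *m A^T == 1%:M.

Definition penrose (R : realFieldType) (m k : nat)
  (A : 'M[R]_(m, k)) (X : 'M[R]_(k, m)) : Prop :=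
  [/\ A *m X *m A = A, X *m A *m X = X, (A *m X)^T = A *m X & (X *m A)^T = X *m A].

Definition pinv (R : realFieldType) (m k : nat) (A : 'M[R]_(m, k)) : 'M[R]_(k, m) :=
  epsilon (inhabits 0) (penrose A).

Definition schur (R : realFieldType) (N p q : nat)
  (keep : 'I_p -> 'I_N) (comp : 'I_q -> 'I_N) (M : 'M[R]_N) : 'M[R]_p :=
  mxsub keep keep M - mxsub keep comp M *m pinv (mxsub comp comp M) *m mxsub comp keep M.

(* Weighted graph with weights w (w x y > 0 iff {x,y} is an edge). *)
Definition deg (R : realFieldType) (n : nat) (w : 'I_n -> 'I_n -> R) (x : 'I_n) : R :=
  \sum_y w x y.

(* Connection Laplacian: diagonal blocks deg(x) I_d, off-diagonal blocks
   -w_xy sigma_xy (which vanish for non-adjacent x, y since w_xy = 0). *)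
Definition conn_lap (R : realFieldType) (n d : nat) (w : 'I_n -> 'I_n -> R)
  (sigma : 'I_n -> 'I_n -> 'M[R]_d) : 'M[R]_(n * d) :=
  \matrix_(p, q)
    let: (x, a) := unvec p in let: (y, b) := unvec q in
    if x == y then (deg w x *: (1%:M : 'M[R]_d)) a b else (- w x y *: sigma x y) a b.

Definition pair_vert (n : nat) (i j : 'I_n) (t : 'I_2) : 'I_n :=
  if t == ord0 then i else j.

Definition keep_idx (n d : nat) (i j : 'I_n) (k : 'I_(2 * d)) : 'I_(n * d) :=
  let: (t, a) := unvec k in mxvec_index (pair_vert i j t) a.

Definition rest_set (n : nat) (i j : 'I_n) : {set 'I_n} := [set x | (x != i) && (x != j)].

Definition comp_idx (n d : nat) (i j : 'I_n) (k : 'I_(#|rest_set i j| * d)) : 'I_(n * d) :=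
  let: (s, a) := unvec k in mxvec_index (enum_val s) a.

Definition conductance (R : realFieldType) (n d : nat) (w : 'I_n -> 'I_n -> R)
  (sigma : 'I_n -> 'I_n -> 'M[R]_d) (i j : 'I_n) : 'M[R]_(2 * d) :=
  schur (@keep_idx n d i j) (@comp_idx n d i j) (conn_lap w sigma).

Definition Fij (R : realFieldType) (n d : nat) (f : 'I_n -> 'M[R]_d) (i j : 'I_n) :
  'M[R]_(2 * d) :=
  \matrix_(p, q)
    let: (t, a) := unvec p in let: (t', b) := unvec q in
    if t == t' then f (pair_vert i j t) a b else 0.

Definition signature (R : realFieldType) (n d : nat) (w : 'I_n -> 'I_n -> R)
  (sigma : 'I_n -> 'I_n -> 'M[R]_d) : Prop :=
  forall x y, 0 < w x y -> orthomx (sigma x y) /\ sigma y x = (sigma x y)^T.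

Definition switching_equiv (R : realFieldType) (n d : nat) (w : 'I_n -> 'I_n -> R)
  (sigma tau : 'I_n -> 'I_n -> 'M[R]_d) (f : 'I_n -> 'M[R]_d) : Prop :=
  (forall x, orthomx (f x)) /\
  (forall x y, 0 < w x y -> f x *m sigma x y = tau x y *m f y).

Definition conn_weighted_graph (R : realFieldType) (n : nat) (w : 'I_n -> 'I_n -> R) : Prop :=
  [/\ forall x y, w x y = w y x, forall x y, 0 <= w x y, forall x, w x x = 0 &
      forall x y, connect (fun a b => 0 < w a b) x y].

(* Switching by f acts on the connection Laplacian as conjugation by the
   block-diagonal orthogonal matrix diag(f(x))_x, so each of the four blocks of
   L^tau relative to the split {i,j} | rest is the corresponding block of
   L^sigma conjugated by diag(f(i), f(j)) or diag(f(x))_(x <> i,j).  The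
   Moore-Penrose pseudoinverse is characterised by the Penrose equations,
   which are invariant under such isometries, so pinv commutes with the
   conjugation; hence C^tau(i,j) = F_ij C^sigma(i,j) F_ij^T, and F_ij^T F_ij = 1
   gives the claim. *)

From mathcomp Require Import all_boot all_order all_algebra.
From Stdlib Require Import ClassicalEpsilon.
Import GRing.Theory Num.Theory.
Local Open Scope ring_scope.
Set Implicit Arguments.
Unset Strict Implicit.

Section Pseudoinverse.
Variable R : realFieldType.

Lemma gram_eq0 m k (A : 'M[R]_(m, k)) : A *m A^T = 0 -> A = 0.
Proof.
move=> AAt0; apply/matrixP => i j; rewrite mxE.
have := congr1 (fun M : 'M_m => M i i) AAt0; rewrite !mxE => sum_sq0.
have {}sum_sq0 : \sum_l A i l ^+ 2 = 0.
  by rewrite -[RHS]sum_sq0; apply: eq_bigr => l _; rewrite mxE expr2.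
apply/eqP; rewrite -sqrf_eq0; apply/eqP.
exact: (psumr_eq0P (fun l _ => sqr_ge0 (A i l)) sum_sq0).
Qed.

Lemma gram_unit m k (A : 'M[R]_(m, k)) : row_free A -> A *m A^T \in unitmx.
Proof.
move=> freeA; rewrite -row_free_unit -kermx_eq0.
set K := kermx _.
have KA0 : K *m A = 0.
  by apply: gram_eq0; rewrite trmx_mul !mulmxA -(mulmxA K) mulmx_ker mul0mx.
by rewrite -(mulmx_free_eq0 _ freeA) KA0.
Qed.

Lemma penrose_full_rank_factor m r k (B : 'M[R]_(m, r)) (C : 'M[R]_(r, k)) :
  B^T *m B \in unitmx -> C *m C^T \in unitmx ->
  penrose (B *m C) (C^T *m invmx (C *m C^T) *m invmx (B^T *m B) *m B^T).
Proof.
move=> uB uC; set X := _ *m B^T.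
have symB : (invmx (B^T *m B))^T = invmx (B^T *m B) by rewrite trmx_inv trmx_mul trmxK.
have symC : (invmx (C *m C^T))^T = invmx (C *m C^T) by rewrite trmx_inv trmx_mul trmxK.
have AX : B *m C *m X = B *m invmx (B^T *m B) *m B^T.
  by rewrite /X -!mulmxA (mulmxA C C^T) mulKVmx.
have XA : X *m (B *m C) = C^T *m invmx (C *m C^T) *m C.
  by rewrite /X -!mulmxA (mulmxA B^T B) mulKmx.
split.
- by rewrite AX -!mulmxA (mulmxA B^T B) mulKmx.
- by rewrite XA /X -!mulmxA (mulmxA C C^T) mulKmx.
- by rewrite AX !trmx_mul trmxK symB mulmxA.
- by rewrite XA !trmx_mul trmxK symC mulmxA.
Qed.

Lemma penrose_pinv m k (A : 'M[R]_(m, k)) : penrose A (pinv A).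
Proof.
apply: epsilon_spec; rewrite -(mulmx_base A); eexists.
apply: penrose_full_rank_factor; last exact/gram_unit/row_base_free.
rewrite -{2}(trmxK (col_base A)); apply: gram_unit.
by rewrite /row_free mxrank_tr; apply: col_base_full.
Qed.

Lemma penrose_unique m k (A : 'M[R]_(m, k)) X Y :
  penrose A X -> penrose A Y -> X = Y.
Proof.
case=> [AXA XAX symAX symXA] [AYA YAY symAY symYA].
have eAX : A *m X = A *m Y.
  transitivity (A *m Y *m (A *m X)); first by rewrite mulmxA AYA.
  by rewrite -[A *m Y in LHS]symAY -[A *m X in LHS]symAX -trmx_mul mulmxA AXA symAY.
have eXA : X *m A = Y *m A.
  transitivity (X *m A *m (Y *m A)); first by rewrite -!mulmxA (mulmxA A Y A) AYA.
  by rewrite -[X *m A in LHS]symXA -[Y *m A in LHS]symYA -trmx_mul -!mulmxA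
    (mulmxA A X A) AXA symYA.
by rewrite -XAX -mulmxA eAX mulmxA eXA YAY.
Qed.

Lemma penrose_isometry m m' k k' (P : 'M[R]_(m', m)) (Q : 'M[R]_(k', k))
    (A : 'M[R]_(m, k)) X :
  P^T *m P = 1%:M -> Q^T *m Q = 1%:M -> penrose A X ->
  penrose (P *m A *m Q^T) (Q *m X *m P^T).
Proof.
move=> isoP isoQ [AXA XAX symAX symXA].
have AX : P *m A *m Q^T *m (Q *m X *m P^T) = P *m (A *m X) *m P^T.
  by rewrite -!mulmxA (mulmxA Q^T) isoQ mul1mx.
have XA : Q *m X *m P^T *m (P *m A *m Q^T) = Q *m (X *m A) *m Q^T.
  by rewrite -!mulmxA (mulmxA P^T) isoP mul1mx.
split.
- rewrite AX -!mulmxA (mulmxA P^T) isoP mul1mx; congr (P *m _).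
  by rewrite !mulmxA AXA.
- rewrite XA -!mulmxA (mulmxA Q^T) isoQ mul1mx; congr (Q *m _).
  by rewrite !mulmxA XAX.
- by rewrite AX trmx_mul trmxK trmx_mul symAX mulmxA.
- by rewrite XA trmx_mul trmxK trmx_mul symXA mulmxA.
Qed.

Lemma pinv_isometry m m' k k' (P : 'M[R]_(m', m)) (Q : 'M[R]_(k', k))
    (A : 'M[R]_(m, k)) :
  P^T *m P = 1%:M -> Q^T *m Q = 1%:M -> pinv (P *m A *m Q^T) = Q *m pinv A *m P^T.
Proof.
move=> isoP isoQ; apply: (penrose_unique (penrose_pinv _)).
exact: penrose_isometry (penrose_pinv A).
Qed.

Lemma schur_conj N p q (keep : 'I_p -> 'I_N) (comp : 'I_q -> 'I_N)
    (Ls Lt : 'M[R]_N) (Fk : 'M[R]_p) (Fc : 'M[R]_q) :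
  Fc^T *m Fc = 1%:M ->
  mxsub keep keep Lt = Fk *m mxsub keep keep Ls *m Fk^T ->
  mxsub keep comp Lt = Fk *m mxsub keep comp Ls *m Fc^T ->
  mxsub comp keep Lt = Fc *m mxsub comp keep Ls *m Fk^T ->
  mxsub comp comp Lt = Fc *m mxsub comp comp Ls *m Fc^T ->
  schur keep comp Lt = Fk *m schur keep comp Ls *m Fk^T.
Proof.
move=> isoFc Ekk Ekc Eck Ecc; rewrite /schur Ekk Ekc Eck Ecc pinv_isometry //.
rewrite mulmxBr mulmxBl; congr (_ - _).
by rewrite -!mulmxA !(mulmxA Fc^T Fc) isoFc !mul1mx.
Qed.

End Pseudoinverse.

Section BlockMatrices.
Variables (R : realFieldType) (d : nat).

Lemma unvecK m k (x : 'I_m) (a : 'I_k) : unvec (mxvec_index x a) = (x, a).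
Proof. by rewrite /unvec /mxvec_index cast_ordK enum_rankK. Qed.

Definition blkmx m k (B : 'I_m -> 'I_k -> 'M[R]_d) : 'M[R]_(m * d, k * d) :=
  \matrix_(p, q) let: (x, a) := unvec p in let: (y, b) := unvec q in B x y a b.

Lemma blkmxE m k (B : 'I_m -> 'I_k -> 'M[R]_d) x a y b :
  blkmx B (mxvec_index x a) (mxvec_index y b) = B x y a b.
Proof. by rewrite mxE !unvecK. Qed.

Lemma eq_blkmx_entry m k (M : 'M[R]_(m * d, k * d)) (B : 'I_m -> 'I_k -> 'M[R]_d) :
  (forall x a y b, M (mxvec_index x a) (mxvec_index y b) = B x y a b) -> M = blkmx B.
Proof.
move=> MB; apply/matrixP => p q.
by case/mxvec_indexP: p => x a; case/mxvec_indexP: q => y b; rewrite blkmxE.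
Qed.

Lemma eq_blkmx m k (B C : 'I_m -> 'I_k -> 'M[R]_d) :
  (forall x y, B x y = C x y) -> blkmx B = blkmx C.
Proof. by move=> BC; apply: eq_blkmx_entry => x a y b; rewrite blkmxE BC. Qed.

Lemma mul_blkmx m k l (B : 'I_m -> 'I_k -> 'M[R]_d) (C : 'I_k -> 'I_l -> 'M[R]_d) :
  blkmx B *m blkmx C = blkmx (fun x y => \sum_z B x z *m C z y).
Proof.
apply: eq_blkmx_entry => x a y b.
rewrite mxE summxE (reindex _ (curry_mxvec_bij _ _)) /=.
under [RHS]eq_bigr do rewrite mxE.
by rewrite pair_bigA; apply: eq_bigr => -[z c] _; rewrite !blkmxE.
Qed.

Lemma trmx_blkmx m k (B : 'I_m -> 'I_k -> 'M[R]_d) :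
  (blkmx B)^T = blkmx (fun x y => (B y x)^T).
Proof. by apply: eq_blkmx_entry => x a y b; rewrite mxE !blkmxE mxE. Qed.

Definition diag_blkmx m (g : 'I_m -> 'M[R]_d) : 'M[R]_(m * d) :=
  blkmx (fun x y => if x == y then g x else 0).

Lemma mul_diag_blkmx m k (g : 'I_m -> 'M[R]_d) (B : 'I_m -> 'I_k -> 'M[R]_d) :
  diag_blkmx g *m blkmx B = blkmx (fun x y => g x *m B x y).
Proof.
rewrite mul_blkmx; apply: eq_blkmx => x y.
rewrite (bigD1 x) //= eqxx big1 ?addr0 // => z.
by rewrite eq_sym => /negbTE ->; rewrite mul0mx.
Qed.

Lemma mul_blkmx_diag m k (B : 'I_m -> 'I_k -> 'M[R]_d) (g : 'I_k -> 'M[R]_d) :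
  blkmx B *m diag_blkmx g = blkmx (fun x y => B x y *m g y).
Proof.
rewrite mul_blkmx; apply: eq_blkmx => x y.
by rewrite (bigD1 y) //= eqxx big1 ?addr0 // => z /negbTE ->; rewrite mulmx0.
Qed.

Lemma trmx_diag_blkmx m (g : 'I_m -> 'M[R]_d) :
  (diag_blkmx g)^T = diag_blkmx (fun x => (g x)^T).
Proof.
rewrite trmx_blkmx; apply: eq_blkmx => x y.
by rewrite eq_sym; case: eqP => [->|_]; rewrite ?trmx0.
Qed.

Lemma diag_blkmx1 m : diag_blkmx (fun _ : 'I_m => 1%:M) = 1%:M.
Proof.
apply/esym/eq_blkmx_entry => x a y b; rewrite !mxE.
have -> : (mxvec_index x a == mxvec_index y b) = ((x, a) == (y, b)).
  by apply/eqP/eqP => [xa_yb|[-> ->]//]; rewrite -(unvecK x a) -(unvecK y b) xa_yb.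
by rewrite xpair_eqE; case: eqP; rewrite ?mxE.
Qed.

Lemma diag_blkmx_isometry m (g : 'I_m -> 'M[R]_d) :
  (forall x, (g x)^T *m g x = 1%:M) -> (diag_blkmx g)^T *m diag_blkmx g = 1%:M.
Proof.
move=> iso_g; rewrite trmx_diag_blkmx {2}/diag_blkmx mul_diag_blkmx -diag_blkmx1.
by apply: eq_blkmx => x y; case: eqP => [->|_]; rewrite ?iso_g ?mulmx0.
Qed.

Lemma conj_diag_blkmx m k (g : 'I_m -> 'M[R]_d) (h : 'I_k -> 'M[R]_d)
    (B : 'I_m -> 'I_k -> 'M[R]_d) :
  diag_blkmx g *m blkmx B *m (diag_blkmx h)^T = blkmx (fun x y => g x *m B x y *m (h y)^T).
Proof. by rewrite mul_diag_blkmx trmx_diag_blkmx mul_blkmx_diag. Qed.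

Definition blk_idx m n (U : 'I_m -> 'I_n) (p : 'I_(m * d)) : 'I_(n * d) :=
  let: (s, a) := unvec p in mxvec_index (U s) a.

Lemma mxsub_blkmx m k p q (U : 'I_p -> 'I_m) (V : 'I_q -> 'I_k)
    (B : 'I_m -> 'I_k -> 'M[R]_d) :
  mxsub (blk_idx U) (blk_idx V) (blkmx B) = blkmx (fun s t => B (U s) (V t)).
Proof. by apply: eq_blkmx_entry => s a t b; rewrite mxE /blk_idx !unvecK blkmxE. Qed.

End BlockMatrices.

Section SwitchingEquivalence.
Variables (R : realFieldType) (n d : nat) (w : 'I_n -> 'I_n -> R).

Definition lap_block (s : 'I_n -> 'I_n -> 'M[R]_d) x y : 'M[R]_d :=
  if x == y then deg w x *: 1%:M else - w x y *: s x y.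

Lemma conn_lap_blkmx s : conn_lap w s = blkmx (lap_block s).
Proof.
by apply: eq_blkmx_entry => x a y b; rewrite mxE !unvecK /lap_block; case: eqP.
Qed.

Lemma Fij_diag_blkmx (f : 'I_n -> 'M[R]_d) i j :
  Fij f i j = diag_blkmx (f \o pair_vert i j).
Proof.
apply: eq_blkmx_entry => t a t' b; rewrite mxE !unvecK.
by case: eqP => [->|_]; rewrite ?mxE.
Qed.

Variables (sigma tau : 'I_n -> 'I_n -> 'M[R]_d) (f : 'I_n -> 'M[R]_d).
Hypotheses (w_ge0 : forall x y, 0 <= w x y) (sw : switching_equiv w sigma tau f).

Lemma switching_isometry x : (f x)^T *m f x = 1%:M.
Proof. by case: sw => orth_f _; apply/mulmx1C/eqP/orth_f. Qed.

Lemma diag_switching_isometry p (U : 'I_p -> 'I_n) :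
  (diag_blkmx (f \o U))^T *m diag_blkmx (f \o U) = 1%:M.
Proof. by apply: diag_blkmx_isometry => s; apply: switching_isometry. Qed.

Lemma Fij_isometry i j : (Fij f i j)^T *m Fij f i j = 1%:M.
Proof. by rewrite Fij_diag_blkmx diag_switching_isometry. Qed.

Lemma lap_block_switching x y :
  lap_block tau x y = f x *m lap_block sigma x y *m (f y)^T.
Proof.
have orth_fy : f y *m (f y)^T = 1%:M by case: sw => orth_f _; apply/eqP/orth_f.
rewrite /lap_block; case: eqP => [->|_].
  by rewrite -scalemxAr -scalemxAl mulmx1 orth_fy.
rewrite -scalemxAr -scalemxAl; have := w_ge0 x y; rewrite le0r.
case/orP => [/eqP ->|/sw.2 ->]; first by rewrite oppr0 !scale0r.
by rewrite -mulmxA orth_fy mulmx1.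
Qed.

Lemma mxsub_conn_lap_switching p q (U : 'I_p -> 'I_n) (V : 'I_q -> 'I_n) :
  mxsub (blk_idx U) (blk_idx V) (conn_lap w tau) =
  diag_blkmx (f \o U) *m mxsub (blk_idx U) (blk_idx V) (conn_lap w sigma)
    *m (diag_blkmx (f \o V))^T.
Proof.
rewrite !conn_lap_blkmx !mxsub_blkmx conj_diag_blkmx.
by apply: eq_blkmx => s t; apply: lap_block_switching.
Qed.

Lemma conductance_switching i j :
  conductance w tau i j = Fij f i j *m conductance w sigma i j *m (Fij f i j)^T.
Proof.
rewrite Fij_diag_blkmx /conductance.
change (@keep_idx n d i j) with (@blk_idx d _ _ (pair_vert i j)).
change (@comp_idx n d i j) with (@blk_idx d _ _ (fun s : 'I_#|rest_set i j| => enum_val s)).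
by apply: (schur_conj (diag_switching_isometry _)); apply: mxsub_conn_lap_switching.
Qed.

End SwitchingEquivalence.

Theorem proposition5p6 (R : realFieldType) (n d : nat) (w : 'I_n -> 'I_n -> R)
  (sigma tau : 'I_n -> 'I_n -> 'M[R]_d) (f : 'I_n -> 'M[R]_d) :
  conn_weighted_graph w -> signature w sigma -> signature w tau ->
  switching_equiv w sigma tau f ->
  forall i j : 'I_n, i != j ->
  Fij f i j *m conductance w sigma i j = conductance w tau i j *m Fij f i j.
Proof.
move=> [_ w_ge0 _ _] _ _ sw i j _.
by rewrite (conductance_switching w_ge0 sw) -mulmxA (Fij_isometry sw) mulmx1.
Qed.
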